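(* For integers $n\ge k\ge1$ define integers $A_h^{k,n}$ ($h\in\mathbb{Z}$) by $A_h^{k,n}=0$ if $h>k$ or $h\le0$, $A_k^{k,n}=1$, and for $1\le h\le k-1$ recursively (downwards in $h$) \[A_h^{k,n}=-\sum_{j=h+1}^{k}(-1)^{\lfloor\frac{j-h+1}{2}\rfloor}\binom{n-j+\lfloor\frac{j-h}{2}\rfloor}{\lfloor\frac{j-h}{2}\rfloor}A_j^{k,n},\] and set $A_h^{k,n}=0$ for all $h$ when $k\le 0$. Then for $k\ge2$ and $1\le h\le k-1$: (1) $A_{h+1}^{k,n}=A_h^{k-1,n-1}$; (2) $A_h^{k,k}=A_h^{k-1,k-1}+A_h^{k-2,k-1}$; (3) if $k<n$, $A_h^{k,n}=A_h^{k,n-1}+A_h^{k-2,n-1}$.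
   Context: $\binom{a}{b}$ denotes the ordinary binomial coefficient and $\lfloor x\rfloor$ the integer part. *)

From mathcomp Require Import all_boot all_order all_algebra.
Set Implicit Arguments. Unset Strict Implicit. Unset Printing Implicit Defensive.
Import Order.TTheory GRing.Theory Num.Theory.
Local Open Scope ring_scope.

(* Afuel m k n h : the downward recursion for A_h^{k,n}, with fuel m
   (fuel k.+1 suffices, since each recursive call is at some j > h and
   needs at most k - j + 1 fuel). Indices h, k, n are naturals; the
   paper's A_h^{k,n} = 0 for h <= 0 and for k <= 0, which is covered
   since h = 0 gives 0 and k = 0 forces h = 0 or h > k. *)
Fixpoint Afuel (m k n h : nat) {struct m} : int :=
  match m with
  | 0%N => 0
  | m'.+1 =>
    if (k < h)%N || (h == 0%N) then 0
    else if h == k then 1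
    else - \sum_(h.+1 <= j < k.+1)
             ((-1) ^+ ((j - h).+1)./2 *
              ('C(n - j + (j - h)./2, (j - h)./2))%:Z *
              Afuel m' k n j)
  end.

Definition A (k n h : nat) : int := Afuel k.+1 k n h.

From mathcomp Require Import all_boot all_order all_algebra zify ring.
Set Implicit Arguments. Unset Strict Implicit. Unset Printing Implicit Defensive.
Import Order.TTheory GRing.Theory Num.Theory.
Local Open Scope ring_scope.

(* The recursively defined numbers A_h^{k,n} have a closed form: for
   1 <= h <= k <= n,
        A_h^{k,n} = C(n - h, floor((k - h)/2)),
   and the three identities of the theorem are then Pascal's rule, the
   symmetry C(m, ceil(m/2)) = C(m, floor(m/2)) and an index shift.

   To prove the closed form we check that it satisfies the defining
   recursion.  With N = n - h, D = k - h and d = j - h, this amounts to the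
   vanishing of a sum of D + 1 terms (rec_term_sum).  Splitting that sum by
   the parity of d and rewriting each product of two binomials with the
   "subset of a subset" identity turns the even and the odd part into two
   instances of the alternating sum
        sum_e (-1)^e C(M, e) C(x - e, p) = C(x - M, p - M),
   each equal to 1, so the sum vanishes. *)

Lemma sum_parity (f : nat -> int) (D : nat) :
  \sum_(d < D.+1) f d =
  \sum_(e < D./2.+1) f e.*2 + \sum_(e < D.+1./2) f e.*2.+1.
Proof.
elim: D => [|D IH]; first by rewrite !big_ord1 big_ord0 addr0.
rewrite big_ord_recr /= IH.
have [Dodd|Deven] := boolP (odd D).
- have -> : (D.+1./2 = D./2.+1)%N by lia.
  have -> : (uphalf D = D./2.+1)%N by lia.
  rewrite [in RHS]big_ord_recr /= -addrA [_ + f _]addrC addrA.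
  by have -> : (D./2.+1.*2 = D.+1)%N by lia.
- have -> : (D.+1./2 = D./2)%N by lia.
  have -> : (uphalf D = D./2)%N by lia.
  rewrite [X in _ = _ + X]big_ord_recr /= addrA.
  by have -> : ((D./2).*2.+1 = D.+1)%N by lia.
Qed.

(* Alternating binomial sum (an iterated finite difference of C(., p)). *)
Lemma alt_binom_sum (M x p : nat) : (M <= x)%N -> (M <= p)%N ->
  \sum_(e < M.+1) (-1) ^+ e * 'C(M, e)%:Z * 'C(x - e, p)%:Z = 'C(x - M, p - M)%:Z.
Proof.
elim: M x => [|M IH] x leMx leMp.
  by rewrite big_ord1 expr0 mul1r bin0 mul1r !subn0.
have IHx := IH x ltac:(lia) ltac:(lia).
have IHx1 := IH x.-1 ltac:(lia) ltac:(lia).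
have IHx_ext : \sum_(e < M.+2) (-1) ^+ e * 'C(M, e)%:Z * 'C(x - e, p)%:Z
               = 'C(x - M, p - M)%:Z.
  by rewrite big_ord_recr /= bin_small // mulr0 mul0r addr0.
have pascal_split :
    \sum_(e < M.+2) (-1) ^+ e * 'C(M.+1, e)%:Z * 'C(x - e, p)%:Z =
    \sum_(e < M.+2) (-1) ^+ e * 'C(M, e)%:Z * 'C(x - e, p)%:Z
  - \sum_(e < M.+1) (-1) ^+ e * 'C(M, e)%:Z * 'C(x.-1 - e, p)%:Z.
  rewrite [LHS]big_ord_recl [X in X - _]big_ord_recl !bin0 -addrA.
  congr (_ + _).
  rewrite -sumrB; apply: eq_bigr => i _.
  rewrite lift0 binS PoszD exprS.
  have -> : (x - i.+1 = x.-1 - i)%N by lia.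
  ring.
rewrite pascal_split IHx_ext IHx1.
have -> : (x - M = (x - M.+1).+1)%N by lia.
have -> : (p - M = (p - M.+1).+1)%N by lia.
have -> : (x.-1 - M = x - M.+1)%N by lia.
rewrite binS PoszD; ring.
Qed.

(* Choosing e elements and then L - e more among b is choosing L elements
   and e of them: C(b, e) C(b - e, L - e) = C(L, e) C(b, L). *)
Lemma bin_subset_of_subset (b L e : nat) : (e <= L)%N -> (L <= b)%N ->
  ('C(b, e) * 'C(b - e, L - e) = 'C(L, e) * 'C(b, L))%N.
Proof.
move=> leeL leLb.
pose X := (e`! * (L - e)`! * (b - L)`!)%N.
have X_gt0 : (0 < X)%N by rewrite !muln_gt0 !fact_gt0.
have fact_be : ('C(b - e, L - e) * ((L - e)`! * (b - L)`!) = (b - e)`!)%N.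
  have -> : (b - L = b - e - (L - e))%N by lia.
  by apply: bin_fact; lia.
have lhsE : ('C(b, e) * 'C(b - e, L - e) * X = b`!)%N.
  by rewrite -(bin_fact (leq_trans leeL leLb)) -fact_be /X; ring.
have rhsE : ('C(L, e) * 'C(b, L) * X = b`!)%N.
  by rewrite -(bin_fact leLb) -(bin_fact leeL) /X; ring.
by apply/eqP; rewrite -(eqn_pmul2r X_gt0) lhsE rhsE.
Qed.

(* The d-th term of the recursion for A_h^{k,n} with the closed form
   substituted, where N = n - h, D = k - h and d = j - h (d = 0 gives the
   closed form of A_h^{k,n} itself). *)
Definition rec_term (N D d : nat) : int :=
  (-1) ^+ d.+1./2 * 'C(N - d + d./2, d./2)%:Z * 'C(N - d, (D - d)./2)%:Z.

(* Even-index terms, in the shape of alt_binom_sum with M = floor(D/2). *)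
Lemma rec_term_even (N D e : nat) : (e <= D./2)%N -> (D <= N)%N ->
  rec_term N D e.*2 = (-1) ^+ e * 'C(D./2, e)%:Z * 'C(N - e, D./2)%:Z.
Proof.
move=> le_e le_DN; rewrite /rec_term.
have -> : (e.*2.+1./2 = e)%N by lia.
have -> : (e.*2./2 = e)%N by lia.
have -> : (N - e.*2 + e = N - e)%N by lia.
have -> : ((D - e.*2)./2 = D./2 - e)%N by lia.
have -> : (N - e.*2 = N - e - e)%N by lia.
by rewrite -mulrA -PoszM bin_subset_of_subset ?PoszM ?mulrA //; lia.
Qed.

(* Odd-index terms, in the shape of alt_binom_sum with M = floor((D-1)/2). *)
Lemma rec_term_odd (N D e : nat) : (e <= D.-1./2)%N -> (1 <= D <= N)%N ->
  rec_term N D e.*2.+1 = - ((-1) ^+ e * 'C(D.-1./2, e)%:Z * 'C(N.-1 - e, D.-1./2)%:Z).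
Proof.
move=> le_e /andP[D_gt0 le_DN]; rewrite /rec_term.
have -> : (e.*2.+2./2 = e.+1)%N by lia.
have -> : (e.*2.+1./2 = e)%N by lia.
have -> : (N - e.*2.+1 + e = N.-1 - e)%N by lia.
have -> : ((D - e.*2.+1)./2 = D.-1./2 - e)%N by lia.
have -> : (N - e.*2.+1 = N.-1 - e - e)%N by lia.
rewrite -mulrA -PoszM bin_subset_of_subset ?PoszM ?mulrA ?exprS; [ring | lia | lia].
Qed.

Lemma rec_term_sum (N D : nat) : (1 <= D <= N)%N ->
  \sum_(d < D.+1) rec_term N D d = 0.
Proof.
move=> D_range; have le_DN : (D <= N)%N by case/andP: D_range.
rewrite sum_parity.
have -> : (D.+1./2 = D.-1./2.+1)%N by lia.
rewrite (eq_bigr _ (fun (e : 'I_D./2.+1) _ => rec_term_even (ltn_ord e) le_DN)).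
rewrite (eq_bigr _ (fun (e : 'I_D.-1./2.+1) _ => rec_term_odd (ltn_ord e) D_range)).
rewrite sumrN !alt_binom_sum; try lia.
by rewrite !subnn !bin0 subrr.
Qed.

Definition Aclosed (k n h : nat) : int :=
  if (k < h)%N || (h == 0%N) then 0 else 'C(n - h, (k - h)./2)%:Z.

Lemma AclosedE (k n h : nat) : (1 <= h <= k)%N ->
  Aclosed k n h = 'C(n - h, (k - h)./2)%:Z.
Proof. by move=> h_range; rewrite /Aclosed ifF //; lia. Qed.

Lemma Aclosed_out (k n h : nat) : (k < h)%N -> Aclosed k n h = 0.
Proof. by move=> lt_kh; rewrite /Aclosed lt_kh. Qed.

Lemma Aclosed_rec (k n h : nat) : (1 <= h)%N -> (h < k <= n)%N ->
  Aclosed k n h = - \sum_(h.+1 <= j < k.+1)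
    ((-1) ^+ (j - h).+1./2 * 'C(n - j + (j - h)./2, (j - h)./2)%:Z * Aclosed k n j).
Proof.
move=> h_gt0 /andP[lt_hk le_kn].
have D_range : (1 <= k - h <= n - h)%N by lia.
have := rec_term_sum D_range.
rewrite big_ord_recl => /eqP; rewrite addr_eq0 => /eqP rec0.
have -> : Aclosed k n h = rec_term (n - h) (k - h) 0.
  by rewrite /rec_term AclosedE ?subn0 ?bin0 ?mul1r //; lia.
rewrite rec0; congr (- _); rewrite -{1}(add0n h.+1) big_addn subSS big_mkord.
apply: eq_bigr => i _; rewrite lift0 AclosedE; last by have := ltn_ord i; lia.
have -> : (i + h.+1 - h = i.+1)%N by lia.
have -> : (n - (i + h.+1) = n - h - i.+1)%N by lia.
by have -> : (k - (i + h.+1) = k - h - i.+1)%N by lia.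
Qed.

Lemma Afuel_closed (m k n h : nat) : (k <= n)%N -> (k - h < m)%N ->
  Afuel m k n h = Aclosed k n h.
Proof.
move=> le_kn; elim: m h => [//|m IH] h lt_m /=.
case: ifP => [out_range|in_range]; first by rewrite /Aclosed out_range.
case: eqP => [->|ne_hk]; first by rewrite AclosedE ?subnn ?bin0 //; lia.
rewrite Aclosed_rec; [|lia|lia].
congr (- _); apply: eq_big_nat => j /andP[lt_hj le_jk].
by rewrite IH //; lia.
Qed.

Lemma A_closed (k n h : nat) : (k <= n)%N -> A k n h = Aclosed k n h.
Proof. by move=> le_kn; rewrite /A Afuel_closed //; lia. Qed.

Lemma bin_central (m : nat) : 'C(m, m.+1./2) = 'C(m, m./2).
Proof.
have [m_odd|m_even] := boolP (odd m); last by have -> : (m.+1./2 = m./2)%N by lia.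
by rewrite -bin_sub; [congr 'C(_, _)|]; lia.
Qed.

Lemma Aclosed_shift (k n h : nat) : (1 <= h)%N ->
  Aclosed k n h.+1 = Aclosed (k - 1) (n - 1) h.
Proof.
move=> h_gt0; have [le_hk|lt_kh] := leqP h.+1 k.
  by rewrite !AclosedE; [congr (Posz 'C(_, _))| |]; lia.
by rewrite !Aclosed_out //; lia.
Qed.

Lemma Aclosed_diag (k h : nat) : (1 <= h < k)%N ->
  Aclosed k (k - 1) h = Aclosed (k - 1) (k - 1) h.
Proof.
move=> h_range; rewrite !AclosedE; [|lia|lia].
have -> : (k - h = (k - 1 - h).+1)%N by lia.
by rewrite bin_central subnAC.
Qed.

Lemma Aclosed_pascal (k n h : nat) : (1 <= h < k)%N -> (h < n)%N ->
  Aclosed k n h = Aclosed k (n - 1) h + Aclosed (k - 2) (n - 1) h.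
Proof.
move=> h_range lt_hn.
have h_le_k : (1 <= h <= k)%N by lia.
rewrite !(AclosedE _ h_le_k).
have -> : (n - h = (n - 1 - h).+1)%N by lia.
have [lt_k2h|le_hk2] := ltnP (k - 2) h.
  have -> : ((k - h)./2 = 0)%N by lia.
  by rewrite Aclosed_out // addr0 !bin0.
have -> : ((k - h)./2 = (k - 2 - h)./2.+1)%N by lia.
by rewrite AclosedE ?binS ?PoszD //; lia.
Qed.

Theorem lemma5p7 (k n h : nat) :
  (k <= n)%N -> (2 <= k)%N -> (1 <= h)%N -> (h <= k - 1)%N ->
  [/\ A k n h.+1 = A (k - 1) (n - 1) h,
      A k k h = A (k - 1) (k - 1) h + A (k - 2) (k - 1) h
    & ((k < n)%N -> A k n h = A k (n - 1) h + A (k - 2) (n - 1) h)].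
Proof.
move=> le_kn le_2k h_gt0 le_hk1.
have h_range : (1 <= h < k)%N by lia.
have lt_hk : (h < k)%N by case/andP: h_range.
split.
- by rewrite !A_closed ?Aclosed_shift //; lia.
- by rewrite !A_closed ?(Aclosed_pascal h_range lt_hk) ?Aclosed_diag //; lia.
- move=> lt_kn; have lt_hn := leq_trans lt_hk (ltnW lt_kn).
  by rewrite !A_closed ?(Aclosed_pascal h_range lt_hn) //; lia.
Qed.
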